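(* Let $O_1(\mathbf v,d)=HC_F(\mathbf v,d)\setminus(\hat\ell_1\cup\hat\ell_2\cup\hat\ell_4)$. Then the closure of $\alpha(O_1(\mathbf v,d))$ in $\mathbb{C}P^2$ is contained in $V(\mathbf v,d)$, and $\alpha$ restricts to a rational map $\alpha:HC_F(\mathbf v,d)\dashrightarrow V(\mathbf v,d)$.
   Context: On $\mathbb{C}P^4$ use homogeneous coordinates $[w_0,w_1,w_2,w_3,x_1]$; let $Y$ be the surface $w_0w_3-w_1w_2=0$, $x_1^2+w_0w_3=0$. For parameters $[\mathbf v,d]=[v_{11},v_{12},v_{21},v_{22},d]\in\mathbb{C}P^4$ (complex, not all zero) set $a_1=v_{11}-v_{21}-d$, $a_2=-v_{11}-v_{21}+d$, $a_3=v_{11}+v_{21}+d$, $a_4=-v_{11}+v_{21}-d$, and let $HC_F(\mathbf v,d)$ be the set of points of $Y$ satisfying $2\big(v_{22}(w_3-w_0)-v_{12}(w_2-w_1)\big)x_1+a_1w_0w_1+a_2w_0w_2+a_3w_1w_3+a_4w_2w_3=0$. The lines $\hat\ell_1=\{[w_0,w_1,0,0,0]\}$, $\hat\ell_2=\{[w_0,0,w_2,0,0]\}$, $\hat\ell_4=\{[0,w_1,0,w_3,0]\}$ lie on $Y$. Define the rational map $\alpha:Y\dashrightarrow\mathbb{C}P^2$, $\alpha([w_0,w_1,w_2,w_3,x_1])=[w_3x_1,w_2x_1,w_2w_3]$ (defined where these three are not all zero). On $\mathbb{C}P^2$ with coordinates $[u_0,u_1,u_2]$ let $V(\mathbf v,d)$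 be the plane quartic curve $P=0$, where $P=a_4u_2^4+2(v_{22}u_0-v_{12}u_1)u_2^3-(a_3u_0^2+a_2u_1^2)u_2^2+2u_0u_1(v_{22}u_1-v_{12}u_0)u_2+a_1u_0^2u_1^2$. *)

(* The complex numbers are modelled as R[i] = complex R for
   an arbitrary R : realType (so C is the usual field of complex numbers when
   R is the real line).  Projective points are handled through homogeneous
   coordinates: a point of CP^n is represented by a nonzero coordinate vector,
   and all conditions below are homogeneous, hence independent of the chosen
   representative. *)
From mathcomp Require Import all_boot all_algebra.
From mathcomp Require Import reals complex.
From mathcomp Require Import mpoly.

Set Implicit Arguments.
Unset Strict Implicit.
Unset Printing Implicit Defensive.

Import GRing.Theory.
Local Open Scope ring_scope.

Section Defs.
Variable C : fieldType.

Definition a1 (v11 v21 d : C) := v11 - v21 - d.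
Definition a2 (v11 v21 d : C) := - v11 - v21 + d.
Definition a3 (v11 v21 d : C) := v11 + v21 + d.
Definition a4 (v11 v21 d : C) := - v11 + v21 - d.

Definition nonzero5 (w0 w1 w2 w3 x1 : C) :=
  ~ (w0 = 0 /\ w1 = 0 /\ w2 = 0 /\ w3 = 0 /\ x1 = 0).

Definition onY (w0 w1 w2 w3 x1 : C) :=
  nonzero5 w0 w1 w2 w3 x1 /\
  w0 * w3 - w1 * w2 = 0 /\ x1 ^+ 2 + w0 * w3 = 0.

Definition onHCF (v11 v12 v21 v22 d : C) (w0 w1 w2 w3 x1 : C) :=
  onY w0 w1 w2 w3 x1 /\
  2%:R * (v22 * (w3 - w0) - v12 * (w2 - w1)) * x1
    + a1 v11 v21 d * w0 * w1 + a2 v11 v21 d * w0 * w2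
    + a3 v11 v21 d * w1 * w3 + a4 v11 v21 d * w2 * w3 = 0.

Definition on_l1 (w0 w1 w2 w3 x1 : C) := w2 = 0 /\ w3 = 0 /\ x1 = 0.
Definition on_l2 (w0 w1 w2 w3 x1 : C) := w1 = 0 /\ w3 = 0 /\ x1 = 0.
Definition on_l4 (w0 w1 w2 w3 x1 : C) := w0 = 0 /\ w2 = 0 /\ x1 = 0.

Definition onO1 (v11 v12 v21 v22 d : C) (w0 w1 w2 w3 x1 : C) :=
  onHCF v11 v12 v21 v22 d w0 w1 w2 w3 x1 /\
  ~ on_l1 w0 w1 w2 w3 x1 /\ ~ on_l2 w0 w1 w2 w3 x1 /\ ~ on_l4 w0 w1 w2 w3 x1.

Definition mk3 (a b c : C) : 'I_3 -> C := fun i => nth 0 [:: a; b; c] i.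
Definition nonzero3 (u : 'I_3 -> C) := exists i, u i <> 0.
Definition proj_eq3 (u u' : 'I_3 -> C) := exists2 l : C, l <> 0 & forall i, u i = l * u' i.

Definition alpha (w0 w1 w2 w3 x1 : C) : 'I_3 -> C :=
  mk3 (w3 * x1) (w2 * x1) (w2 * w3).
Definition alpha_defined (w0 w1 w2 w3 x1 : C) :=
  nonzero3 (alpha w0 w1 w2 w3 x1).

Definition alpha_O1 (v11 v12 v21 v22 d : C) (u : 'I_3 -> C) :=
  nonzero3 u /\
  exists w0 w1 w2 w3 x1, onO1 v11 v12 v21 v22 d w0 w1 w2 w3 x1 /\
    alpha_defined w0 w1 w2 w3 x1 /\ proj_eq3 u (alpha w0 w1 w2 w3 x1).

(* (Zariski) closure in CP^2 of a set S of points: the common zero locus of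
   all homogeneous polynomials vanishing on S *)
Definition closure_P2 (S : ('I_3 -> C) -> Prop) (u : 'I_3 -> C) :=
  nonzero3 u /\
  forall (n : nat) (f : {mpoly C[3]}), f \is n.-homog ->
    (forall s, S s -> f.@[s] = 0) -> f.@[u] = 0.

Definition Pquartic (v11 v12 v21 v22 d : C) (u : 'I_3 -> C) : C :=
  let u0 := u ord0 in let u1 := u (lift ord0 ord0) in let u2 := u ord_max in
  a4 v11 v21 d * u2 ^+ 4 + 2%:R * (v22 * u0 - v12 * u1) * u2 ^+ 3
  - (a3 v11 v21 d * u0 ^+ 2 + a2 v11 v21 d * u1 ^+ 2) * u2 ^+ 2
  + 2%:R * u0 * u1 * (v22 * u1 - v12 * u0) * u2
  + a1 v11 v21 d * u0 ^+ 2 * u1 ^+ 2.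

Definition onV (v11 v12 v21 v22 d : C) (u : 'I_3 -> C) :=
  nonzero3 u /\ Pquartic v11 v12 v21 v22 d u = 0.

End Defs.

(* The pull-back of the quartic P along alpha lies in the ideal generated by
   the three equations cutting out HC_F(v,d) (an explicit polynomial identity),
   so alpha maps every point of HC_F(v,d) where it is defined into V(v,d).
   Since V(v,d) is the zero locus of a homogeneous polynomial, it is Zariski
   closed and therefore contains the closure of alpha(O_1(v,d)). *)
From Pilot Require Import Defs.
From mathcomp Require Import all_boot all_algebra.
From mathcomp Require Import reals complex.
From mathcomp Require Import mpoly.
From mathcomp Require Import ring.

Set Implicit Arguments.
Unset Strict Implicit.
Unset Printing Implicit Defensive.

Import GRing.Theory.
Local Open Scope ring_scope.

Section QuarticCurve.
Variable C : fieldType.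
Variables v11 v12 v21 v22 d : C.

Local Notation a1 := (a1 v11 v21 d).
Local Notation a2 := (a2 v11 v21 d).
Local Notation a3 := (a3 v11 v21 d).
Local Notation a4 := (a4 v11 v21 d).
Local Notation P := (Pquartic v11 v12 v21 v22 d).

Definition HCF_form (w0 w1 w2 w3 x1 : C) : C :=
  2%:R * (v22 * (w3 - w0) - v12 * (w2 - w1)) * x1
  + a1 * w0 * w1 + a2 * w0 * w2 + a3 * w1 * w3 + a4 * w2 * w3.

Lemma Pquartic_scale (u u' : 'I_3 -> C) (l : C) :
  (forall i, u i = l * u' i) -> P u = l ^+ 4 * P u'.
Proof. by move=> uE; rewrite /Pquartic !uE; ring. Qed.

Lemma Pquartic_alpha_in_ideal (w0 w1 w2 w3 x1 : C) :
  exists c1 c2 c3 : C,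
    P (alpha w0 w1 w2 w3 x1) =
      c1 * (w0 * w3 - w1 * w2) + c2 * (x1 ^+ 2 + w0 * w3)
      + c3 * HCF_form w0 w1 w2 w3 x1.
Proof.
exists (w2 ^+ 2 * w3 ^+ 3 * (a1 * w0 + a3 * w3 + 2%:R * v12 * x1)).
exists (w2 ^+ 2 * w3 ^+ 2 * (2%:R * x1 * (v22 * w2 - v12 * w3)
          + a1 * (x1 ^+ 2 - w0 * w3) - a3 * w3 ^+ 2 - a2 * w2 ^+ 2)).
exists (w2 ^+ 3 * w3 ^+ 3).
by rewrite /Pquartic /alpha /mk3 /HCF_form /Defs.a1 /Defs.a2 /Defs.a3 /Defs.a4 /=; ring.
Qed.

Lemma Pquartic_alpha_onHCF (w0 w1 w2 w3 x1 : C) :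
  onHCF v11 v12 v21 v22 d w0 w1 w2 w3 x1 -> P (alpha w0 w1 w2 w3 x1) = 0.
Proof.
case=> [[_ [Y1 Y2]] HCF].
have [c1 [c2 [c3 ->]]] := Pquartic_alpha_in_ideal w0 w1 w2 w3 x1.
by rewrite Y1 Y2 [HCF_form _ _ _ _ _]HCF !mulr0 !addr0.
Qed.

Lemma alpha_O1_onV (u : 'I_3 -> C) :
  alpha_O1 v11 v12 v21 v22 d u -> onV v11 v12 v21 v22 d u.
Proof.
case=> nz_u [w0 [w1 [w2 [w3 [x1 [[HCF _] [_ [l _ uE]]]]]]]].
split=> //.
by rewrite (Pquartic_scale uE) (Pquartic_alpha_onHCF HCF) mulr0.
Qed.

Definition mono3 (k0 k1 k2 : nat) : {mpoly C[3]} :=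
  'X_ord0 ^+ k0 * 'X_(lift ord0 ord0) ^+ k1 * 'X_ord_max ^+ k2.

Lemma mono3_homog (k0 k1 k2 k : nat) :
  (k0 + k1 + k2)%N = k -> mono3 k0 k1 k2 \is k.-homog.
Proof.
have X_homog (i : 'I_3) : ('X_i : {mpoly C[3]}) \is 1.-homog.
  by rewrite dhomogX; apply/eqP; exact: mdeg1.
have Xn_homog (i : 'I_3) e : ('X_i ^+ e : {mpoly C[3]}) \is e.-homog.
  by have := dhomogMn e (X_homog i); rewrite mul1n.
by move=> <-; apply/dhomogM/Xn_homog/dhomogM/Xn_homog/Xn_homog.
Qed.

Lemma meval_mono3 (u : 'I_3 -> C) (k0 k1 k2 : nat) :
  (mono3 k0 k1 k2).@[u] = u ord0 ^+ k0 * u (lift ord0 ord0) ^+ k1 * u ord_max ^+ k2.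
Proof. by rewrite /mono3 !mevalM !rmorphXn /= !mevalXU. Qed.

Definition Pquartic_mpoly : {mpoly C[3]} :=
  a4 *: mono3 0 0 4 + (2%:R * v22) *: mono3 1 0 3 - (2%:R * v12) *: mono3 0 1 3
  - a3 *: mono3 2 0 2 - a2 *: mono3 0 2 2
  + (2%:R * v22) *: mono3 1 2 1 - (2%:R * v12) *: mono3 2 1 1
  + a1 *: mono3 2 2 0.

Lemma Pquartic_mpoly_homog : Pquartic_mpoly \is 4.-homog.
Proof. by rewrite !(rpredD, rpredB, rpredN, rpredZ) ?mono3_homog. Qed.

Lemma meval_Pquartic_mpoly (u : 'I_3 -> C) : Pquartic_mpoly.@[u] = P u.
Proof.
by rewrite /Pquartic_mpoly !(mevalD, mevalN, mevalZ, meval_mono3) /Pquartic; ring.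
Qed.

Lemma closure_P2_onV (S : ('I_3 -> C) -> Prop) (u : 'I_3 -> C) :
  (forall s, S s -> onV v11 v12 v21 v22 d s) ->
  closure_P2 S u -> onV v11 v12 v21 v22 d u.
Proof.
move=> S_V [nz_u closed_u]; split=> //.
rewrite -meval_Pquartic_mpoly (closed_u 4 _ Pquartic_mpoly_homog) // => s Ss.
by rewrite meval_Pquartic_mpoly; case: (S_V s Ss).
Qed.

End QuarticCurve.

Theorem lemma6p2 (R : realType) (v11 v12 v21 v22 d : R[i]) :
  nonzero5 v11 v12 v21 v22 d ->
  (forall u : 'I_3 -> R[i],
     closure_P2 (alpha_O1 v11 v12 v21 v22 d) u -> onV v11 v12 v21 v22 d u) /\
  (forall w0 w1 w2 w3 x1 : R[i],
     onHCF v11 v12 v21 v22 d w0 w1 w2 w3 x1 ->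
     alpha_defined w0 w1 w2 w3 x1 ->
     onV v11 v12 v21 v22 d (alpha w0 w1 w2 w3 x1)).
Proof.
move=> _; split=> [u|w0 w1 w2 w3 x1 HCF alpha_def].
  exact/closure_P2_onV/alpha_O1_onV.
by split; [exact: alpha_def | exact: Pquartic_alpha_onHCF].
Qed.
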